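(* Let $m,n\ge 1$ and $1\le r<n$ be integers. Let $J\in\mathbb{C}^{m\times m}$ be unitary, let $p_1,\dots,p_n\in\mathbb{C}$, and let $H_1,\dots,H_n\in\mathbb{C}^{m}$ (column vectors) be nonzero with $H_i^\dagger H_i=-(p_i+p_i^* )$ for every $i$ (so $\mathrm{Re}\,p_i<0$). Define the first-order cavity transfer function matrices $$\tilde K_i(s)=I+\frac{H_iH_i^\dagger}{p_i-s},\qquad i=1,\dots,n,$$ the transfer function matrix $K(s)=J\tilde K_n(s)\tilde K_{n-1}(s)\cdots\tilde K_1(s)$, and the approximation $$K_a(s)=J_a\,\tilde K_r(s)\tilde K_{r-1}(s)\cdots\tilde K_1(s),\qquad J_a=J\,\tilde K_n(0)\tilde K_{n-1}(0)\cdots\tilde K_{r+1}(0).$$ Then $K_a(s)$ is physically realizable (it is lossless bounded real and admits a physically realizable state space realization), and the error $K_e(s)=K(s)-K_a(s)$ satisfies $$\|K_e(j\omega)\|\le\sum_{k=1}^{n-r}B_k(\omega)\quad\text{for all }\omega\ge 0,$$ where $\|\cdot\|$ is the induced (spectral) matrix norm, $j$ is the imaginary unit, and $$B_k(\omega)=\omega\sum_{r+1\le i_1<i_2<\dots<i_k\le n}C_{i_1,\dots,i_k}(\omega),$$ $$C_{i_1,\dots,i_k}(\omega)=\left|\sum_{q=0}^{k-1}(-j\omega)^{k-1-q}\,e_q(p_{i_1},\dots,p_{i_k})\right|\cdot\frac{\prod_{l=1}^k\big(-(p_{i_l}+p_{i_l}^* )\big)}{\prod_{l=1}^k|p_{i_l}|\,|p_{i_l}-j\omega|},$$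 with $e_q$ the $q$-th elementary symmetric polynomial ($e_0=1$).
   Context: A linear quantum system is given by $da=Fa\,dt+G\,du$, $dy=\bar H a\,dt+J\,du$ with $F\in\mathbb{C}^{n\times n}$, $G\in\mathbb{C}^{n\times m}$, $\bar H\in\mathbb{C}^{m\times n}$, $J\in\mathbb{C}^{m\times m}$; its transfer function is $\bar H(sI-F)^{-1}G+J$. It is physically realizable if there exist $\Theta=\Theta^\dagger>0$, $\Lambda$, $M=M^\dagger$, $S$ with $S^\dagger S=I$ such that $F=-\Theta(iM+\tfrac12\Lambda^\dagger\Lambda)$, $G=-\Theta\Lambda^\dagger S$, $\bar H=\Lambda$, $J=S$; equivalently, there is $\Theta=\Theta^\dagger>0$ with $F\Theta+\Theta F^\dagger+GG^\dagger=0$, $G=-\Theta\bar H^\dagger J$, $J^\dagger J=I$. A transfer function matrix $\Phi(s)$ realized by $(F,G,\bar H,J)$ is lossless bounded real if $F$ is Hurwitz and $\Phi(i\omega)^\dagger\Phi(i\omega)=I$ for all real $\omega$. $^\dagger$ denotes conjugate transpose and $^*$ complex conjugation. Each $\tilde K_i$ is the transfer function of the generalized cavity $da_i=p_ia_i\,dt-H_i^\dagger du$, $dy=H_ia_i\,dt+du$. *)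

(* Complex numbers are modelled by an arbitrary
   numClosedFieldType C (e.g. algC). *)
From HB Require Import structures.
From mathcomp Require Import all_boot all_order all_algebra.
From mathcomp Require Export spectral.
Set Implicit Arguments. Unset Strict Implicit. Unset Printing Implicit Defensive.
Import Order.TTheory GRing.Theory Num.Theory.
Local Open Scope ring_scope.
Local Open Scope sesquilinear_scope.

Section Defs.
Variable C : numClosedFieldType.

Definition mprod (m : nat) (l : seq 'M[C]_m) : 'M[C]_m := foldr mulmx 1%:M l.

Definition Kt (m : nat) (p : nat -> C) (H : nat -> 'cV[C]_m) (i : nat) (s : C)
  : 'M[C]_m := 1%:M + (p i - s)^-1 *: (H i *m (H i)^t*).

Definition Kfull (m n : nat) (J : 'M[C]_m) p H (s : C) : 'M[C]_m :=
  J *m mprod [seq Kt p H i s | i <- rev (iota 1 n)].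

Definition Ja (m n r : nat) (J : 'M[C]_m) p H : 'M[C]_m :=
  J *m mprod [seq Kt p H i 0 | i <- rev (iota r.+1 (n - r))].

Definition Kapprox (m n r : nat) (J : 'M[C]_m) p H (s : C) : 'M[C]_m :=
  Ja n r J p H *m mprod [seq Kt p H i s | i <- rev (iota 1 r)].

Definition tf (N m : nat) (F : 'M[C]_N) (G : 'M[C]_(N, m)) (Hb : 'M[C]_(m, N))
  (Jr : 'M[C]_m) (s : C) : 'M[C]_m :=
  Hb *m invmx (s%:M - F) *m G + Jr.

Definition posdefmx (N : nat) (T : 'M[C]_N) : Prop :=
  T^t* = T /\ forall v : 'cV[C]_N, v != 0 -> 0 < (v^t* *m T *m v) 0 0.

(* physical realizability (second, equivalent characterization of the paper) *)
Definition phys_realizable (N m : nat) (F : 'M[C]_N) (G : 'M[C]_(N, m))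
  (Hb : 'M[C]_(m, N)) (Jr : 'M[C]_m) : Prop :=
  exists T : 'M[C]_N, [/\ posdefmx T,
     F *m T + T *m F^t* + G *m G^t* = 0,
     G = - (T *m Hb^t* *m Jr) &
     Jr^t* *m Jr = 1%:M].

Definition hurwitz (N : nat) (F : 'M[C]_N) : Prop :=
  forall l : C, eigenvalue F l -> 'Re l < 0.

Definition lossless_bounded_real (N m : nat) (F : 'M[C]_N) (G : 'M[C]_(N, m))
  (Hb : 'M[C]_(m, N)) (Jr : 'M[C]_m) : Prop :=
  hurwitz F /\
  forall w : C, w \is Num.real ->
    (tf F G Hb Jr ('i * w))^t* *m tf F G Hb Jr ('i * w) = 1%:M.

Definition vnorm (m : nat) (v : 'cV[C]_m) : C := sqrtC (\sum_i `|v i 0| ^+ 2).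

Definition specnorm_le (m : nat) (A : 'M[C]_m) (b : C) : Prop :=
  forall v : 'cV[C]_m, vnorm (A *m v) <= b * vnorm v.

Definition esym (n : nat) (p : nat -> C) (S : {set 'I_n.+1}) (q : nat) : C :=
  \sum_(T : {set 'I_n.+1} | (T \subset S) && (#|T| == q)) \prod_(i in T) p i.

Definition Cterm (n : nat) (p : nat -> C) (S : {set 'I_n.+1}) (w : C) : C :=
  `| \sum_(q < #|S|) (- ('i * w)) ^+ (#|S|.-1 - q) * esym p S q | *
  (\prod_(l in S) (- (p l + (p l)^*))) /
  (\prod_(l in S) (`|p l| * `|p l - 'i * w|)).

Definition Bterm (n r : nat) (p : nat -> C) (k : nat) (w : C) : C :=
  w * \sum_(S : {set 'I_n.+1} | (#|S| == k) && [forall i in S, (r < i)%N]) Cterm p S w.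

End Defs.

From Pilot Require Import Defs.
From HB Require Import structures.
From mathcomp Require Import all_boot all_order all_algebra.
From mathcomp Require Import ring zify.
Set Implicit Arguments. Unset Strict Implicit. Unset Printing Implicit Defensive.
Import Order.TTheory GRing.Theory Num.Theory.
Local Open Scope ring_scope.
Local Open Scope sesquilinear_scope.

(* Every passive cavity K~_i (H_i^dagger H_i = -(p_i + p_i^* ), H_i <> 0) has its
   pole in the open left half-plane and is unitary on the imaginary axis.

   A single cavity is realized by (p_i, -H_i^dagger, H_i, 1); the
   series connection of two realizations satisfying the physical realizability
   equations with Theta = I again satisfies them, with a block lower-triangular
   state matrix.  Post-multiplying the cascade K~_r ... K~_1 by the constant
   unitary J_a gives a physically realizable, lossless bounded real
   realization of K_a.

   Writing K = J P(s) Q(s) and K_a = J P(0) Q(s) with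
   P = K~_n ... K~_{r+1}, Q = K~_r ... K~_1, all factors are unitary on the
   imaginary axis, so a telescoping argument bounds ||K(jw) - K_a(jw)|| by
   the sum of ||K~_i(jw) - K~_i(0)||, i = r+1..n.  These are computed exactly
   and add up to B_1(w); the remaining B_k(w) are nonnegative. *)

Section VectorNorm.
Variables (C : numClosedFieldType) (m : nat).
Implicit Types (u v w : 'cV[C]_m) (a : C).

Definition sqnorm v : C := \sum_i `|v i 0| ^+ 2.
Definition dot u v : C := \sum_i (u i 0)^* * v i 0.

Lemma dotE u v : dot u v = (u^t* *m v) 0 0.
Proof. by rewrite mxE; apply: eq_bigr => i _; rewrite !mxE. Qed.

Lemma sqnorm_dot v : sqnorm v = dot v v.
Proof. by apply: eq_bigr => i _; rewrite normCKC. Qed.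

Lemma dotC u v : dot v u = (dot u v)^*.
Proof. by rewrite /dot rmorph_sum; apply: eq_bigr => i _; rewrite rmorphM /= conjCK mulrC. Qed.

Lemma dotDl u v w : dot (u + v) w = dot u w + dot v w.
Proof. by rewrite /dot -big_split; apply: eq_bigr => i _; rewrite !mxE rmorphD /= mulrDl. Qed.

Lemma dotDr u v w : dot w (u + v) = dot w u + dot w v.
Proof. by rewrite /dot -big_split; apply: eq_bigr => i _; rewrite !mxE mulrDr. Qed.

Lemma dotBl u v w : dot (u - v) w = dot u w - dot v w.
Proof. by rewrite /dot -sumrB; apply: eq_bigr => i _; rewrite !mxE rmorphB /= mulrBl. Qed.

Lemma dotBr u v w : dot w (u - v) = dot w u - dot w v.
Proof. by rewrite /dot -sumrB; apply: eq_bigr => i _; rewrite !mxE mulrBr. Qed.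

Lemma dotZl a u v : dot (a *: u) v = a^* * dot u v.
Proof. by rewrite /dot mulr_sumr; apply: eq_bigr => i _; rewrite !mxE rmorphM /= mulrA. Qed.

Lemma dotZr a u v : dot u (a *: v) = a * dot u v.
Proof. by rewrite /dot mulr_sumr; apply: eq_bigr => i _; rewrite !mxE mulrCA. Qed.

Lemma sqnorm_ge0 v : 0 <= sqnorm v.
Proof. by apply: sumr_ge0 => i _; rewrite exprn_ge0. Qed.

Lemma sqnorm_eq0 v : (sqnorm v == 0) = (v == 0).
Proof.
apply/idP/eqP => [|->]; last by rewrite /sqnorm big1 // => i _; rewrite mxE normr0 expr0n.
rewrite psumr_eq0 => [/allP v0|i _]; last by rewrite exprn_ge0.
apply/matrixP => i j; rewrite (ord1 j) mxE.
by have /= := v0 i (mem_index_enum i); rewrite sqrf_eq0 normr_eq0 => /eqP.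
Qed.

Lemma vnormE v : vnorm v = sqrtC (sqnorm v). Proof. by []. Qed.

Lemma vnorm_ge0 v : 0 <= vnorm v.
Proof. by rewrite sqrtC_ge0 sqnorm_ge0. Qed.

Lemma sqr_vnorm v : vnorm v ^+ 2 = sqnorm v.
Proof. exact: sqrtCK. Qed.

Lemma vnormZ a v : vnorm (a *: v) = `|a| * vnorm v.
Proof.
rewrite !vnormE; have -> : sqnorm (a *: v) = `|a| ^+ 2 * sqnorm v.
  by rewrite /sqnorm mulr_sumr; apply: eq_bigr => i _; rewrite mxE normrM exprMn.
by rewrite sqrtCM ?nnegrE ?exprn_ge0 ?sqnorm_ge0 // sqrCK.
Qed.

Lemma vnorm0 : vnorm (0 : 'cV[C]_m) = 0.
Proof. by rewrite -(scale0r 0) vnormZ normr0 mul0r. Qed.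

(* Cauchy-Schwarz, obtained from 0 <= |<u,u> v - <u,v> u|^2. *)
Lemma cauchy_schwarz u v : `|dot u v| <= vnorm u * vnorm v.
Proof.
rewrite -(ler_pXn2r (_ : 0 < 2)%N) ?nnegrE ?mulr_ge0 ?vnorm_ge0 //.
rewrite exprMn !sqr_vnorm.
have [u0|u0] := eqVneq u 0.
  rewrite u0 /dot big1 ?normr0 ?expr0n ?mulr_ge0 ?sqnorm_ge0 // => i _.
  by rewrite mxE rmorph0 mul0r.
have a_gt0 : 0 < sqnorm u by rewrite lt_def sqnorm_eq0 u0 sqnorm_ge0.
set a := sqnorm u; set b := sqnorm v; set c := dot u v.
have a_real : a^* = a by rewrite conj_Creal // gtr0_real.
have := sqnorm_ge0 (a *: v - c *: u).
rewrite sqnorm_dot !(dotBl, dotBr, dotZl, dotZr) -!sqnorm_dot -/a -/b -/c.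
rewrite a_real (dotC u v) -/c.
have -> : a * (a * b - c * c^*) - c^* * (a * c - c * a) = a * (a * b - c^* * c) by ring.
by rewrite pmulr_rge0 // subr_ge0 normCKC.
Qed.

Lemma vnormD u v : vnorm (u + v) <= vnorm u + vnorm v.
Proof.
rewrite -(ler_pXn2r (_ : 0 < 2)%N) ?nnegrE ?addr_ge0 ?vnorm_ge0 //.
rewrite sqrrD !sqr_vnorm sqnorm_dot dotDl !dotDr -!sqnorm_dot (dotC u v).
set c := dot u v.
have -> : sqnorm u + c + (c^* + sqnorm v) = sqnorm u + (c + c^*) + sqnorm v by ring.
have Re_twice : c + c^* = 'Re c *+ 2 by rewrite ReE -mulr_natr divfK ?pnatr_eq0.
rewrite Re_twice lerD2r lerD2l ler_wMn2r //.
exact: le_trans (leif_le (leif_Re_Creal c)) (cauchy_schwarz u v).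
Qed.

End VectorNorm.

Section UnitaryProducts.
Variable C : numClosedFieldType.

Lemma adjmxM a b c (A : 'M[C]_(a, b)) (B : 'M[C]_(b, c)) : (A *m B)^t* = B^t* *m A^t*.
Proof. by rewrite trmx_mul map_mxM. Qed.

Lemma unitarymx_adjK m (U : 'M[C]_m) : U \is unitarymx -> U^t* *m U = 1%:M.
Proof. by move/unitarymxP/mulmx1C. Qed.

Lemma unitarymx1 m : (1%:M : 'M[C]_m) \is unitarymx.
Proof. by apply/unitarymxP; rewrite trmx1 map_mx1 mulmx1. Qed.

Lemma vnorm_unitary m (U : 'M[C]_m) v : U \is unitarymx -> vnorm (U *m v) = vnorm v.
Proof.
move=> /unitarymx_adjK UU; rewrite !vnormE !sqnorm_dot !dotE adjmxM.
by rewrite -mulmxA (mulmxA _ U) UU mul1mx.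
Qed.

Lemma mprod_cat m (l1 l2 : seq 'M[C]_m) : mprod (l1 ++ l2) = mprod l1 *m mprod l2.
Proof. by elim: l1 => [|A l IH] /=; rewrite ?mul1mx // /mprod /= -/(mprod _) IH mulmxA. Qed.

Lemma mprod_unitary m (l : seq 'M[C]_m) : all (mem unitarymx) l -> mprod l \is unitarymx.
Proof.
elim: l => [|A l IH] /=; first by rewrite unitarymx1.
by case/andP=> UA Ul; rewrite /mprod /= -/(mprod _) mul_unitarymx // IH.
Qed.

(* Telescoping: for unitary factors, the distance between two ordered products is
   at most the sum of the distances between corresponding factors, since
   X P - Y Q = X (P - Q) + (X - Y) Q. *)
Lemma specnorm_mprodB m (l : seq nat) (X Y : nat -> 'M[C]_m) (b : nat -> C) :
  (forall i, i \in l -> [/\ X i \is unitarymx, Y i \is unitarymx &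
                            specnorm_le (X i - Y i) (b i)]) ->
  specnorm_le (mprod (map X l) - mprod (map Y l)) (\sum_(i <- l) b i).
Proof.
elim: l => [|i l IH] factors v; first by rewrite big_nil subrr mul0mx vnorm0 mul0r.
have [UX UY dXY] := factors i (mem_head _ _).
have factors_tail j : j \in l -> _ := fun lj => factors j (@mem_behead _ (i :: l) j lj).
set P := mprod (map X l); set Q := mprod (map Y l).
have UQ : Q \is unitarymx.
  by apply/mprod_unitary/allP => _ /mapP[j lj ->]; case: (factors_tail j lj).
have -> : mprod (map X (i :: l)) - mprod (map Y (i :: l)) =
          X i *m (P - Q) + (X i - Y i) *m Q.
  by rewrite /mprod /= -!/(mprod _) mulmxBr mulmxBl addrA subrK.
rewrite big_cons mulmxDl mulrDl addrC; apply: le_trans (vnormD _ _) _.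
rewrite -!mulmxA (vnorm_unitary _ UX); apply: lerD; last exact: IH.
by rewrite -(vnorm_unitary v UQ); apply: dXY.
Qed.

Lemma specnorm_le_trans m (A : 'M[C]_m) b b' : specnorm_le A b -> b <= b' ->
  specnorm_le A b'.
Proof. by move=> Ab bb' v; apply: le_trans (Ab v) _; rewrite ler_wpM2r ?vnorm_ge0. Qed.

Lemma specnorm_unitary_mul m (U A V : 'M[C]_m) b :
  U \is unitarymx -> V \is unitarymx -> specnorm_le A b -> specnorm_le (U *m A *m V) b.
Proof.
move=> uU uV Ab v; rewrite -!mulmxA vnorm_unitary // -(vnorm_unitary v uV).
exact: Ab.
Qed.

End UnitaryProducts.

Lemma lower_block_mx_unit (R : comUnitRingType) n1 n2
    (A : 'M[R]_n1) (X : 'M[R]_(n2, n1)) (B : 'M[R]_n2) :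
  (block_mx A 0 X B \in unitmx) = (A \in unitmx) && (B \in unitmx).
Proof. by rewrite !unitmxE det_lblock unitrM. Qed.

Lemma invmx_lower_block (R : comUnitRingType) n1 n2
    (A : 'M[R]_n1) (X : 'M[R]_(n2, n1)) (B : 'M[R]_n2) :
  A \in unitmx -> B \in unitmx ->
  invmx (block_mx A 0 X B) = block_mx (invmx A) 0 (- (invmx B *m X *m invmx A)) (invmx B).
Proof.
move=> uA uB; have uM : block_mx A 0 X B \in unitmx by rewrite lower_block_mx_unit uA.
rewrite -[LHS]mul1mx; apply: (canLR (mulmxK uM)).
rewrite mulmx_block !(mulmx0, mul0mx, add0r, addr0) !mulVmx // mulNmx mulmxKV //.
by rewrite addNr -scalar_mx_block.
Qed.

Section ImaginaryAxis.
Variable C : numClosedFieldType.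

Lemma conj_iw (w : C) : w \is Num.real -> ('i * w)^* = - ('i * w).
Proof. by move=> wr; rewrite rmorphM /= conjCi conj_Creal // mulNr. Qed.

Lemma Re_iw (w : C) : w \is Num.real -> 'Re ('i * w) = 0.
Proof. by move=> wr; rewrite ReE conj_iw // subrr mul0r. Qed.

End ImaginaryAxis.

Section Cavity.
Variables (C : numClosedFieldType) (m : nat) (p : nat -> C) (H : nat -> 'cV[C]_m).

Definition passive_cavity (i : nat) : Prop :=
  H i != 0 /\ (H i)^t* *m H i = (- (p i + (p i)^*))%:M.

Variable i : nat.
Hypothesis cav : passive_cavity i.

Lemma sqnorm_cavity : sqnorm (H i) = - (p i + (p i)^*).
Proof. by case: cav => _ HH; rewrite sqnorm_dot dotE HH mxE eqxx mulr1n. Qed.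

Lemma Re_pole_lt0 : 'Re (p i) < 0.
Proof.
have H_gt0 : 0 < sqnorm (H i) by case: cav => H0 _; rewrite lt_def sqnorm_eq0 H0 sqnorm_ge0.
by rewrite ReE pmulr_llt0 ?invr_gt0 ?ltr0n // -oppr_gt0 -sqnorm_cavity.
Qed.

Lemma pole_neq z : 0 <= 'Re z -> z != p i.
Proof. by apply: contraTneq => ->; rewrite -real_ltNge ?Creal_Re ?real0 // Re_pole_lt0. Qed.

(* On the imaginary axis (s^* = -s) the cavity transfer matrix is unitary:
   with X = H_i H_i^dagger we have X^2 = -(p_i + p_i^* ) X, and the cross terms
   cancel because c + c^* = (p_i + p_i^* ) c c^* for c = (p_i - s)^-1. *)
Lemma Kt_unitary s : s^* = - s -> Kt p H i s \is unitarymx.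
Proof.
move=> s_imag; apply/unitarymxP; rewrite /Kt.
set c := (p i - s)^-1; set X := H i *m (H i)^t*.
have X_herm : X^t* = X by rewrite /X adjmxM trmxCK.
have X2 : X *m X = (- (p i + (p i)^*)) *: X.
  by case: cav => _ HH; rewrite /X mulmxA -(mulmxA (H i)) HH mul_mx_scalar scalemxAl.
rewrite linearD map_mxD /= trmx1 map_mx1 linearZ map_mxZ /= X_herm.
rewrite mulmxDl !mulmxDr !mul1mx mulmx1 -scalemxAl -scalemxAr X2 !scalerA.
rewrite -addrA -!scalerDl; suff -> : c^* + (c + c * c^* * - (p i + (p i)^*)) = 0.
  by rewrite scale0r addr0.
have d_conj : (p i - s)^* = (p i)^* + s by rewrite rmorphB /= s_imag opprK.
have [d0|d0] := eqVneq (p i - s) 0; first by rewrite /c d0 invr0 rmorph0 !(mul0r, addr0).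
rewrite /c fmorphV /= d_conj; field.
by rewrite d0 -d_conj conjC_eq0 d0.
Qed.

Lemma Kt0_unitary : Kt p H i 0 \is unitarymx.
Proof. by apply: Kt_unitary; rewrite rmorph0 oppr0. Qed.

(* Deviation of K~_i on the imaginary axis from its DC value:
   K~_i(jw) - K~_i(0) = jw / ((p_i - jw) p_i) * H_i H_i^dagger. *)
Definition cavity_deviation (w : C) : C :=
  w * (- (p i + (p i)^*)) / (`|p i| * `|p i - 'i * w|).

Lemma Kt_deviation w : 0 <= w ->
  specnorm_le (Kt p H i ('i * w) - Kt p H i 0) (cavity_deviation w).
Proof.
move=> w_ge0 v; set s := 'i * w.
have Res : 0 <= 'Re s by rewrite Re_iw ?ger0_real.
have ps0 : p i - s != 0 by rewrite subr_eq0 eq_sym pole_neq.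
have p0 : p i != 0 by rewrite eq_sym pole_neq // raddf0.
set a := (p i - s)^-1 - (p i - 0)^-1.
have -> : Kt p H i s - Kt p H i 0 = a *: (H i *m (H i)^t*).
  by rewrite /Kt opprD addrACA subrr add0r -scalerBl.
have norm_a : `|a| = w / (`|p i - s| * `|p i|).
  have -> : a = s / ((p i - s) * p i) by rewrite /a subr0; field; rewrite ps0 p0.
  by rewrite normf_div normrM /s normrM normCi mul1r ger0_norm.
rewrite -scalemxAl -mulmxA (mx11_scalar ((H i)^t* *m v)) -dotE mul_mx_scalar scalerA.
rewrite vnormZ normrM.
apply: le_trans (_ : `|a| * (vnorm (H i) * vnorm v * vnorm (H i)) <= _).
  rewrite -[leLHS]mulrA; apply: ler_wpM2l => //.
  by apply: ler_wpM2r; [exact: vnorm_ge0 | exact: cauchy_schwarz].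
rewrite mulrAC -expr2 sqr_vnorm sqnorm_cavity norm_a /cavity_deviation.
by rewrite -/s [`|p i| * _]mulrC le_eqVlt; apply/orP; left; apply/eqP; ring.
Qed.

End Cavity.

Section Realizability.
Variable C : numClosedFieldType.

Lemma posdefmx1 N : posdefmx (1%:M : 'M[C]_N).
Proof.
split=> [|v v0]; first by rewrite trmx1 map_mx1.
by rewrite mulmx1 -dotE -sqnorm_dot lt_def sqnorm_eq0 v0 sqnorm_ge0.
Qed.

Lemma hurwitz_resolvent N (F : 'M[C]_N) :
  (forall z, 0 <= 'Re z -> z%:M - F \in unitmx) -> hurwitz F.
Proof.
move=> resolvent l /eigenvalueP[v vF v0]; rewrite real_ltNge ?Creal_Re ?real0 //.
apply: contra v0 => /resolvent ulF; apply/eqP.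
by rewrite -[v]mulmx1 -(mulmxV ulF) mulmxA mulmxBr vF mul_mx_scalar subrr mul0mx.
Qed.

End Realizability.

Section CascadeRealization.
Variables (C : numClosedFieldType) (m : nat) (p : nat -> C) (H : nat -> 'cV[C]_m).

(* (F, G, Hb, Jr) is a realization of the cascade K~_{l_1}(s) ... K~_{l_k}(s) that
   satisfies the physical realizability equations with Theta = I, and whose
   resolvent (z - F)^-1 exists on the closed right half-plane. *)
Definition realizes_cascade N (F : 'M[C]_N) (G : 'M[C]_(N, m)) (Hb : 'M[C]_(m, N))
    (Jr : 'M[C]_m) (l : seq nat) : Prop :=
  [/\ F + F^t* + G *m G^t* = 0, G = - (Hb^t* *m Jr), Jr \is unitarymx,
      (forall z, 0 <= 'Re z -> z%:M - F \in unitmx) &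
      (forall s, all (fun i => s != p i) l -> s%:M - F \in unitmx ->
         tf F G Hb Jr s = mprod [seq Kt p H i s | i <- l])].

Lemma realizes_nil : realizes_cascade (0 : 'M[C]_0) 0 0 1%:M [::].
Proof.
split=> //; rewrite ?unitarymx1 //; try by apply/matrixP => -[].
- by move=> z _; rewrite unitmxE det_mx00 unitr1.
- by move=> s _ _; rewrite /tf !mul0mx add0r.
Qed.

Lemma realizes_cavity i : passive_cavity p H i ->
  realizes_cascade ((p i)%:M : 'M[C]_1) (- (H i)^t*) (H i) 1%:M [:: i].
Proof.
move=> cav; have [_ HH] := cav; split; rewrite ?unitarymx1 ?mulmx1 //.
- rewrite linearN map_mxN /= trmxCK mulNmx mulmxN opprK HH tr_scalar_mx map_scalar_mx.
  by apply/matrixP => a b; rewrite !mxE -!mulrnDl subrr mul0rn.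
- move=> z Rez; rewrite unitmxE det_mx11 !mxE /= !mulr1n unitfE subr_eq0.
  exact: pole_neq cav _ Rez.
move=> s /andP[sp _] _; rewrite /tf -raddfB /= invmx_scalar mul_mx_scalar -scalemxAl.
by rewrite /mprod /= mulmx1 addrC mulmxN scalerN -scaleNr -invrN opprB.
Qed.

(* Series connection: feeding the output of system 1 into system 2 realizes the
   concatenated cascade; the new state matrix is block lower triangular. *)
Lemma realizes_series N1 N2 F1 G1 Hb1 J1 F2 G2 Hb2 J2 l1 l2 :
  @realizes_cascade N1 F1 G1 Hb1 J1 l1 -> @realizes_cascade N2 F2 G2 Hb2 J2 l2 ->
  realizes_cascade (block_mx F1 0 (G2 *m Hb1) F2) (col_mx G1 (G2 *m J1))
    (row_mx (J2 *m Hb1) Hb2) (J2 *m J1) (l2 ++ l1).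
Proof.
move=> [e1 g1 uJ1 st1 tf1] [e2 g2 uJ2 st2 tf2].
have J1J1 : J1 *m J1^t* = 1%:M by apply/unitarymxP.
have J2J2 : J2^t* *m J2 = 1%:M := unitarymx_adjK uJ2.
have resolvent z : z%:M - block_mx F1 0 (G2 *m Hb1) F2 =
    block_mx (z%:M - F1) 0 (- (G2 *m Hb1)) (z%:M - F2).
  by rewrite (scalar_mx_block N1 N2 z) opp_block_mx add_block_mx oppr0 addr0 add0r.
split.
- rewrite tr_block_mx map_block_mx tr_col_mx map_row_mx mul_col_row !add_block_mx.
  rewrite -[RHS]block_mx0; congr block_mx => //.
  + by rewrite add0r !adjmxM g1 mulNmx -mulmxA (mulmxA J1) J1J1 mul1mx subrr.
  + rewrite trmx0 map_mx0 addr0 g1 linearN map_mxN /= !adjmxM trmxCK mulmxN.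
    by rewrite -mulmxA (mulmxA J1) J1J1 mul1mx subrr.
  + by rewrite adjmxM !mulmxA -(mulmxA G2) J1J1 mulmx1.
- rewrite tr_row_mx map_col_mx mul_col_mx opp_col_mx g1 g2 !adjmxM.
  by rewrite !mulmxA -(mulmxA _ (J2^t*)) J2J2 mulmx1 mulNmx.
- exact: mul_unitarymx.
- by move=> z Rez; rewrite resolvent lower_block_mx_unit st1 // st2.
move=> s; rewrite all_cat resolvent lower_block_mx_unit => /andP[a2 a1] /andP[u1 u2].
rewrite map_cat mprod_cat -tf2 // -tf1 // /tf resolvent invmx_lower_block //.
rewrite mul_row_block mul_row_col !mulmx0 add0r !(mulmxN, mulNmx) opprK.
rewrite !mulmxDl !mulmxDr !mulmxA -!addrA addrCA; congr (_ + _); exact: addrCA.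
Qed.

Lemma realizes_cascade_exists (l : seq nat) : {in l, forall i, passive_cavity p H i} ->
  exists N (F : 'M[C]_N) G Hb Jr, realizes_cascade F G Hb Jr l.
Proof.
elim: l => [|i l IH] cav; first by exists 0%N, 0, 0, 0, 1%:M; exact: realizes_nil.
have [N [F [G [Hb [Jr rl]]]]] := IH (fun j lj => cav j (@mem_behead _ (i :: l) j lj)).
have ri := realizes_cavity (cav i (mem_head i l)).
by exists (N + 1)%N; do 4!eexists; exact: realizes_series rl ri.
Qed.

Lemma compensated_cascade_realization (l : seq nat) (U : 'M[C]_m) :
  {in l, forall i, passive_cavity p H i} -> U \is unitarymx ->
  exists N (F : 'M[C]_N) G Hb Jr,
    [/\ phys_realizable F G Hb Jr, lossless_bounded_real F G Hb Jr &
        forall s, all (fun i => s != p i) l -> s%:M - F \in unitmx ->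
          tf F G Hb Jr s = U *m mprod [seq Kt p H i s | i <- l]].
Proof.
move=> cav uU; have UU := unitarymx_adjK uU.
have [N [F [G [Hb [Jr [lyap gHJ uJr st tfl]]]]]] := realizes_cascade_exists cav.
have tfU s : tf F G (U *m Hb) (U *m Jr) s = U *m tf F G Hb Jr s.
  by rewrite /tf mulmxDr !mulmxA.
exists N, F, G, (U *m Hb), (U *m Jr); split.
- exists 1%:M; split; [exact: posdefmx1 | by rewrite mulmx1 mul1mx | |].
  + by rewrite mul1mx !adjmxM -mulmxA (mulmxA _ U) UU mul1mx.
  + by rewrite adjmxM -mulmxA (mulmxA _ U) UU mul1mx; apply: unitarymx_adjK.
- split=> [|w wr]; first exact: hurwitz_resolvent.
  have Re_jw : 0 <= 'Re ('i * w) by rewrite Re_iw.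
  apply: unitarymx_adjK; rewrite tfU tfl ?st //; last first.
    by apply/allP => i /cav ci; apply: pole_neq ci _ Re_jw.
  apply/mul_unitarymx/mprod_unitary => //; apply/allP => _ /mapP[i /cav ci ->].
  by apply: Kt_unitary ci _ (conj_iw wr).
- by move=> s ls us; rewrite tfU tfl.
Qed.

End CascadeRealization.

Section ErrorBound.
Variable C : numClosedFieldType.

(* Singleton index sets: C_{i}(w) is the k = 1 summand of the bound, which is
   exactly the deviation bound of the single cavity i divided by w. *)
Lemma Cterm_set1 n (p : nat -> C) (x : 'I_n.+1) w :
  Cterm p [set x] w = (- (p x + (p x)^*)) / (`|p x| * `|p x - 'i * w|).
Proof.
have esym_set1 : Defs.esym p [set x] 0 = 1.
  rewrite /Defs.esym (big_pred1 set0) ?big_set0 // => T /=.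
  by rewrite cards_eq0 andbC; case: eqP => // ->; rewrite sub0set.
by rewrite /Cterm cards1 big_ord1 subnn expr0 mul1r esym_set1 normr1 mul1r !big_set1.
Qed.

Lemma sum_card1_sets n r (F : {set 'I_n.+1} -> C) :
  \sum_(S : {set 'I_n.+1} | (#|S| == 1%N) && [forall i in S, (r < i)%N]) F S =
  \sum_(x : 'I_n.+1 | (r < x)%N) F [set x].
Proof.
have pick1 (x : 'I_n.+1) : [pick y in [set x]] = Some x.
  by case: pickP => [y /set1P -> //|/(_ x)]; rewrite set11.
rewrite (reindex_onto (fun x => [set x]) (fun S => odflt ord0 [pick x in S])) /=.
  apply: eq_bigl => x; rewrite cards1 pick1 !eqxx andbT /=.
  by apply/forall_inP/idP => [/(_ x (set11 x))|rx _ /set1P ->].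
by move=> S /andP[/cards1P[y ->] _]; rewrite pick1.
Qed.

Lemma Bterm1 n r (p : nat -> C) w :
  Bterm n r p 1 w = \sum_(x : 'I_n.+1 | (r < x)%N) cavity_deviation p x w.
Proof.
rewrite /Bterm sum_card1_sets mulr_sumr; apply: eq_bigr => x _.
by rewrite Cterm_set1 /cavity_deviation mulrA.
Qed.

Lemma Bterm_ge0 n r (p : nat -> C) k w : 0 <= w ->
  (forall l : 'I_n.+1, (r < l)%N -> 0 <= - (p l + (p l)^*)) -> 0 <= Bterm n r p k w.
Proof.
move=> w_ge0 passive; rewrite /Bterm mulr_ge0 // sumr_ge0 // => S /andP[_ /forall_inP rS].
by rewrite /Cterm divr_ge0 ?mulr_ge0 // prodr_ge0 // => l Sl; rewrite ?mulr_ge0 ?passive ?rS.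
Qed.

Lemma Bterm1_le_sum n r (p : nat -> C) w : (r < n)%N -> 0 <= w ->
  (forall l : 'I_n.+1, (r < l)%N -> 0 <= - (p l + (p l)^*)) ->
  Bterm n r p 1 w <= \sum_(1 <= k < (n - r).+1) Bterm n r p k w.
Proof.
move=> rn w_ge0 passive; rewrite big_ltn ?ltnS ?subn_gt0 // lerDl.
by apply: sumr_ge0 => k _; apply: Bterm_ge0.
Qed.

(* Error bound: with P(s) = K~_n(s)...K~_{r+1}(s) and Q(s) = K~_r(s)...K~_1(s),
   K(jw) - K_a(jw) = J (P(jw) - P(0)) Q(jw); J and Q(jw) are unitary and P is
   handled by telescoping, which yields B_1(w). *)
Lemma Kerror_bound m n r (J : 'M[C]_m) p H : (r < n)%N -> J \is unitarymx ->
  (forall i, (1 <= i <= n)%N -> passive_cavity p H i) -> forall w, 0 <= w ->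
  specnorm_le (Kfull n J p H ('i * w) - Kapprox n r J p H ('i * w))
    (\sum_(1 <= k < (n - r).+1) Bterm n r p k w).
Proof.
move=> rn uJ cav w w_ge0; have wr : w \is Num.real := ger0_real w_ge0.
pose P s := mprod [seq Kt p H i s | i <- rev (iota r.+1 (n - r))].
pose Q := mprod [seq Kt p H i ('i * w) | i <- rev (iota 1 r)].
have split_n : rev (iota 1 n) = rev (iota r.+1 (n - r)) ++ rev (iota 1 r).
  by rewrite -rev_cat -[r.+1]add1n -iotaD subnKC // ltnW.
have -> : Kfull n J p H ('i * w) - Kapprox n r J p H ('i * w) = J *m (P ('i * w) - P 0) *m Q.
  by rewrite /Kfull /Kapprox /Ja split_n map_cat mprod_cat mulmxBr mulmxBl !mulmxA.
have cav_upper i : i \in rev (iota r.+1 (n - r)) -> passive_cavity p H i.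
  by rewrite mem_rev mem_iota => ri; apply: cav; lia.
have uQ : Q \is unitarymx.
  apply/mprod_unitary/allP => A /mapP[i]; rewrite mem_rev mem_iota => ri ->.
  by apply: Kt_unitary (conj_iw wr); apply: cav; lia.
apply: (specnorm_unitary_mul uJ uQ).
apply: (specnorm_le_trans (specnorm_mprodB (b := cavity_deviation p ^~ w) _)).
  move=> i /cav_upper ci; split; last exact: Kt_deviation.
    exact: Kt_unitary ci _ (conj_iw wr).
  exact: Kt0_unitary.
apply: le_trans (Bterm1_le_sum rn w_ge0 _).
  rewrite Bterm1 big_rev /= -[iota _ _]/(index_iota r.+1 n.+1).
  by rewrite big_geq_mkord.
move=> l rl; have ln : (1 <= l <= n)%N by have := ltn_ord l; lia.
by rewrite -(sqnorm_cavity (cav l ln)) sqnorm_ge0.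
Qed.

End ErrorBound.

Theorem theorem4 (C : numClosedFieldType) (m n r : nat)
  (hm : (0 < m)%N) (hr : (0 < r)%N) (hrn : (r < n)%N)
  (J : 'M[C]_m) (p : nat -> C) (H : nat -> 'cV[C]_m)
  (hJ : J \is unitarymx)
  (hH0 : forall i, (1 <= i <= n)%N -> H i != 0)
  (hHp : forall i, (1 <= i <= n)%N -> (H i)^t* *m H i = (- (p i + (p i)^*))%:M) :
  (exists (N : nat) (F : 'M[C]_N) (G : 'M[C]_(N, m)) (Hb : 'M[C]_(m, N)) (Jr : 'M[C]_m),
     [/\ phys_realizable F G Hb Jr,
         lossless_bounded_real F G Hb Jr &
         forall s : C, (forall i, (1 <= i <= r)%N -> s != p i) ->
           s%:M - F \in unitmx ->
           Kapprox n r J p H s = tf F G Hb Jr s])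
  /\
  (forall w : C, 0 <= w ->
     specnorm_le (Kfull n J p H ('i * w) - Kapprox n r J p H ('i * w))
       (\sum_(1 <= k < (n - r).+1) Bterm n r p k w)).
Proof.
have cav i : (1 <= i <= n)%N -> passive_cavity p H i.
  by move=> ni; split; [exact: hH0 | exact: hHp].
split; last exact: Kerror_bound.
have cav_first i : i \in rev (iota 1 r) -> passive_cavity p H i.
  by rewrite mem_rev mem_iota => ri; apply: cav; lia.
(* K_a is the cascade K~_r ... K~_1 followed by the constant unitary J_a. *)
have uJa : Ja n r J p H \is unitarymx.
  rewrite /Ja mul_unitarymx // mprod_unitary //; apply/allP => A /mapP[i].
  by rewrite mem_rev mem_iota => ri ->; apply/Kt0_unitary/cav; lia.
have [N [F [G [Hb [Jr [phys lbr tfKa]]]]]] := compensated_cascade_realization cav_first uJa.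
exists N, F, G, Hb, Jr; split=> // s sp us; rewrite tfKa //.
by apply/allP => i; rewrite mem_rev mem_iota => ri; apply: sp; lia.
Qed.
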